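(* Let $N\ge 2$ and let $p$ be a star path of length $N$ with edge matrix $E$. Let $K$ be the smallest positive integer such that circularly shifting the columns of $E$ by $K$ (i.e. replacing column $n$ by column $(n+K)\bmod N$ for every $n$) yields $E$ again. Then the order of rotational symmetry of $p$ is $O_{rot}=N/K$.
   Context: A path of length $N$ is a vector $p=(p_0,\dots,p_{N-1})$ whose entries are the integers $0,\dots,N-1$ in some order; indices are cyclic, $p_N=p_0$, $s_{-1}=s_{N-1}$; $x\bmod N$ denotes the remainder in $\{0,\dots,N-1\}$. Nodes $0,\dots,N-1$ are placed at equally spaced points clockwise around a circle; the shape of $p$ is the set of chords joining node $p_n$ to node $p_{n+1}$. The order of rotational symmetry $O_{rot}$ is the number of angles $\theta\in[0,2\pi)$ such that the rotation by $\theta$ about the center of the circle maps the shape onto itself. The path differences are $d_n=p_{n+1}-p_n$, and the steps are $s_n=d_n$ if $|d_n|<N/2$; $s_n=N/2$ if $|d_n|=N/2$; $s_n=d_n-N$ if $d_n>N/2$; $s_n=d_n+N$ if $d_n<-N/2$. $p$ is a star path if $|s_n|\neq1$ for all $n$. The edge matrix $E=(e_{in})\in\mathbb{Z}^{2\times N}$: for node $n$ let $k$ be the index with $p_k=n$; take $s_k$ and $-s_{k-1}$, replace each by $0$ if its absolute value equals $N/2$, and let $e_{1n}\le e_{2n}$ be these two integers sorted in nondecreasing order. *)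

From mathcomp Require Import all_boot all_order all_algebra.
Set Implicit Arguments. Unset Strict Implicit. Unset Printing Implicit Defensive.
Import Order.TTheory GRing.Theory Num.Theory.

Definition is_path (N : nat) (p : seq nat) : bool := perm_eq p (iota 0 N).

Section PathDefs.
Variable (p : seq nat).
Local Notation N := (size p).

Definition pv (n : nat) : nat := nth 0%N p (n %% N).

Definition pdiff (n : nat) : int := (Posz (pv n.+1) - Posz (pv n))%R.

Definition pstep (n : nat) : int :=
  let d := pdiff n in
  if (2 * absz d < N)%N then d
  else if (2 * absz d == N)%N then Posz (N./2)
  else if (0 < d)%R then (d - Posz N)%R
  else (d + Posz N)%R.

Definition star_path : bool := [forall n : 'I_N, absz (pstep n) != 1%N].

Definition zhalf (x : int) : int := if (2 * absz x == N)%N then 0%R else x.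

(* column of the edge matrix for node m: (e_{1m}, e_{2m}) *)
Definition edge_col (m : nat) : int * int :=
  let k := index m p in
  let a := zhalf (pstep k) in
  let b := zhalf (- pstep (k + N - 1)%N)%R in
  (Order.min a b, Order.max a b).

Definition edge_shift_inv (K : nat) : bool :=
  [forall n : 'I_N, edge_col ((n + K) %% N) == edge_col n].

(* the shape: node a and b are joined by a chord of p *)
Definition chord (a b : nat) : bool :=
  has (fun n => ((pv n == a) && (pv n.+1 == b)) || ((pv n == b) && (pv n.+1 == a)))
      (iota 0 N).

(* rotation by 2*pi*k/N (clockwise) sends node a to node (a+k) mod N;
   it maps the shape onto itself *)
Definition rot_sym (k : nat) : bool :=
  [forall a : 'I_N, forall b : 'I_N,
     chord a b == chord ((a + k) %% N) ((b + k) %% N)].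

Definition O_rot : nat := #|[pred k : 'I_N | rot_sym k]|.

End PathDefs.

(* A rotation by k maps the shape of p onto itself iff, for every node a, it
   maps the two neighbours of a along p onto the two neighbours of a + k; for
   N >= 3, which the star condition forces, these two neighbours are distinct.
   Column a of E is the sorted pair of reduced steps from a to its neighbours.
   A reduced step depends only on the clockwise distance, so it is invariant
   under rotation, and it determines the neighbour.  Hence rotation by k is a
   symmetry exactly when k is a cyclic period of the columns of E.  The periods
   are the multiples of the least one, K, which therefore divides N, and
   exactly N/K of the rotations 0, ..., N-1 are symmetries. *)

From mathcomp Require Import all_boot all_order all_algebra.
From mathcomp Require Import zify.
Import Order.TTheory GRing.Theory Num.Theory.
Set Implicit Arguments. Unset Strict Implicit. Unset Printing Implicit Defensive.

Definition upair_eq (T : Type) (a b c d : T) : Prop :=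
  (a = c /\ b = d) \/ (a = d /\ b = c).

Lemma upair_eq_of_mem (T : Type) (a b c d : T) :
  a <> b -> a = c \/ a = d -> b = c \/ b = d -> upair_eq a b c d.
Proof. by move=> ab [] ea [] eb; subst a b; [case: ab|left|right|case: ab]. Qed.

Lemma upair_eq_inj (T U : Type) (P : {pred T}) (f : T -> U) (a b c d : T) :
  {in P &, injective f} -> a \in P -> b \in P -> c \in P -> d \in P ->
  upair_eq (f a) (f b) (f c) (f d) <-> upair_eq a b c d.
Proof.
move=> f_inj Pa Pb Pc Pd; split; last by case=> [[-> ->]|[-> ->]]; [left|right].
by case=> [[/f_inj-> // /f_inj-> //]|[/f_inj-> // /f_inj-> //]]; [left|right].
Qed.

Lemma minmax_eqP (disp : Order.disp_t) (T : orderType disp) (a b c d : T) :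
  (Order.min a b, Order.max a b) = (Order.min c d, Order.max c d) <-> upair_eq a b c d.
Proof.
split; last by case=> [[-> ->]|[-> ->]]; rewrite // minC maxC.
by case: (leP a b) => _; case: (leP c d) => _ [-> ->]; [left|right|right|left].
Qed.

Section Periods.
Variables (T : Type) (f : nat -> T).

Definition is_period (k : nat) : Prop := forall n, f (n + k) = f n.

Lemma period0 : is_period 0.
Proof. by move=> n; rewrite addn0. Qed.

Lemma periodD k t : is_period k -> is_period t -> is_period (k + t).
Proof. by move=> Pk Pt n; rewrite addnA Pt Pk. Qed.

Lemma periodM k j : is_period k -> is_period (k * j).
Proof.
move=> Pk; elim: j => [|j IHj]; first by rewrite muln0; apply: period0.
by rewrite mulnS; apply: periodD.
Qed.

Lemma periodB k t : is_period k -> is_period t -> is_period (k - t).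
Proof.
move=> Pk Pt n; have [tk|kt] := leqP t k; last by rewrite (eqnP (ltnW kt)) addn0.
by rewrite -Pt -addnA subnK // Pk.
Qed.

Lemma period_modn k K : is_period k -> is_period K -> is_period (k %% K).
Proof.
move=> Pk PK; have -> : k %% K = k - K * (k %/ K) by rewrite {2}(divn_eq k K) mulnC addKn.
by apply: periodB => //; apply: periodM.
Qed.

Lemma min_period_dvdP K : 0 < K -> is_period K ->
  (forall K', 0 < K' < K -> ~ is_period K') -> forall k, is_period k <-> K %| k.
Proof.
move=> K_gt0 PK Kmin k; split=> [Pk|/dvdnP [j ->]]; last by rewrite mulnC; apply: periodM.
apply: contraT; rewrite /dvdn -lt0n => k_modK_gt0.
by case: (Kmin (k %% K)); rewrite ?k_modK_gt0 ?ltn_pmod //; apply: period_modn.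
Qed.

End Periods.

Lemma cyclic_periodP (T : eqType) (N : nat) (f : nat -> T) k : 0 < N ->
  reflect (is_period (fun n => f (n %% N)) k) [forall n : 'I_N, f ((n + k) %% N) == f n].
Proof.
move=> N_gt0; apply: (iffP forallP) => [P n | P n].
  by have /eqP := P (Ordinal (ltn_pmod n N_gt0)); rewrite /= modnDml.
by apply/eqP; have := P n; rewrite (modn_small (ltn_ord n)).
Qed.

Lemma card_ord_dvdn N K : K %| N -> #|[pred k : 'I_N | K %| k]| = N %/ K.
Proof.
move=> KN; rewrite divn_count_dvd -sum1_card.
transitivity (\sum_(0 <= i < N) (K %| i)).
  by rewrite big_mkcond big_mkord; apply: eq_bigr => i _; rewrite inE; case: (K %| i).
apply/eqP; rewrite -(eqn_add2r (K %| N)) -big_nat_recr // big_ltn // dvdn0 KN.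
by rewrite addnC.
Qed.

Lemma modn_lt_double N x : x < N + N -> x %% N = if x < N then x else x - N.
Proof.
case: ifP => [x_lt_N _|x_ge_N x_lt_2N]; first exact: modn_small.
have N_le_x : N <= x by rewrite leqNgt x_ge_N.
by rewrite -{1}(subnK N_le_x) modnDr modn_small //; lia.
Qed.

Section CyclicDistance.
Variable N : nat.

Definition cw_dist (a b : nat) : nat := (b + N - a) %% N.

Definition reduced_step (a b : nat) : int :=
  let r := cw_dist a b in
  if 2 * r < N then Posz r else if 2 * r == N then 0%R else (Posz r - Posz N)%R.

Lemma cw_distE a b : a < N -> b < N -> cw_dist a b = if a <= b then b - a else b + N - a.
Proof. by move=> aN bN; rewrite /cw_dist modn_lt_double; [repeat case: ifP|]; lia. Qed.

Lemma cw_dist_shift a b k : a < N -> b < N ->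
  cw_dist ((a + k) %% N) ((b + k) %% N) = cw_dist a b.
Proof.
move=> aN bN; rewrite -(modnDmr a) -(modnDmr b).
have : k %% N < N by rewrite ltn_pmod //; lia.
move: (k %% N) => {}k kN.
rewrite !(@modn_lt_double _ (_ + k)); try lia.
rewrite !cw_distE //; repeat case: ifP; lia.
Qed.

Lemma reduced_step_shift a b k : a < N -> b < N ->
  reduced_step ((a + k) %% N) ((b + k) %% N) = reduced_step a b.
Proof. by move=> aN bN; rewrite /reduced_step cw_dist_shift. Qed.

Lemma reduced_step_inj a x y : a < N -> x < N -> y < N -> x != a -> y != a ->
  reduced_step a x = reduced_step a y -> x = y.
Proof. by move=> aN xN yN; rewrite /reduced_step !cw_distE //; repeat case: ifP; lia. Qed.

Lemma eqn_modDr_lt x y k : x < N -> y < N -> ((x + k) %% N == (y + k) %% N) = (x == y).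
Proof. by move=> xN yN; rewrite eqn_modDr !modn_small. Qed.

End CyclicDistance.

Section PathNodes.
Variable p : seq nat.
Hypothesis path_p : is_path (size p) p.
Hypothesis size_gt0 : 0 < size p.
Local Notation N := (size p).

Lemma mem_path m : (m \in p) = (m < N).
Proof. by rewrite (perm_mem path_p) mem_iota. Qed.

Lemma pv_lt n : pv p n < N.
Proof. by rewrite -mem_path mem_nth ?ltn_pmod. Qed.

Lemma pv_inj i j : pv p i = pv p j -> i = j %[mod N].
Proof.
by move=> /eqP; rewrite nth_uniq ?ltn_pmod ?(perm_uniq path_p) ?iota_uniq // => /eqP.
Qed.

Lemma pv_modn n : pv p (n %% N) = pv p n.
Proof. by rewrite /pv modn_mod. Qed.

Lemma pv_index m : m < N -> pv p (index m p) = m.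
Proof. by rewrite -mem_path => mp; rewrite /pv modn_small ?nth_index ?index_mem. Qed.

Lemma pv_succ_eq i j : pv p i = pv p j -> pv p i.+1 = pv p j.+1.
Proof.
move/pv_inj=> eq_ij.
by rewrite -pv_modn -addn1 -modnDml eq_ij modnDml addn1 pv_modn.
Qed.

Lemma pv_pred_eq i j : pv p i.+1 = pv p j.+1 -> pv p i = pv p j.
Proof.
move/pv_inj/eqP; rewrite -[i.+1]addn1 -[j.+1]addn1 eqn_modDr => /eqP eq_ij.
by rewrite -pv_modn eq_ij pv_modn.
Qed.

Lemma pv_offset_eq i s t : s < N -> t < N -> (pv p (i + s) == pv p (i + t)) = (s == t).
Proof.
move=> sN tN; apply/eqP/eqP => [/pv_inj/eqP|-> //].
by rewrite eqn_modDl !modn_small // => /eqP.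
Qed.

Lemma star_size_gt2 : 1 < N -> star_path p -> 2 < N.
Proof.
move=> N_gt1 /forallP star; rewrite ltn_neqAle N_gt1 andbT; apply/eqP => N2.
have := star (Ordinal size_gt0); rewrite /pstep /pdiff /=.
have := pv_offset_eq 0 N_gt1 size_gt0; rewrite !add0n => /negbT.
move: (pv_lt 0) (pv_lt 1); rewrite -N2.
by move: (pv p 0) (pv p 1) => x y xN yN /eqP; repeat case: ifP; lia.
Qed.

Definition next_node (a : nat) : nat := pv p (index a p).+1.
(* [index a p + N - 1] rather than [index a p - 1], which truncates at 0. *)
Definition prev_node (a : nat) : nat := pv p (index a p + N - 1).

Lemma pv_succ_prev_index m : m < N -> pv p (index m p + N - 1).+1 = m.
Proof.
move=> mN; have -> : (index m p + N - 1).+1 = index m p + N by lia.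
rewrite -pv_modn modnDr pv_modn; exact: pv_index.
Qed.

Lemma next_node_lt a : next_node a < N.
Proof. exact: pv_lt. Qed.

Lemma prev_node_lt a : prev_node a < N.
Proof. exact: pv_lt. Qed.

Lemma prev_nodeE a : prev_node a = pv p (index a p + (N - 1)).
Proof. by rewrite /prev_node addnBA. Qed.

Lemma next_node_neq a : 1 < N -> a < N -> next_node a != a.
Proof.
move=> N_gt1 aN; rewrite -{2}(pv_index aN) /next_node -addn1.
by rewrite -[in X in _ != X](addn0 (index a p)) pv_offset_eq.
Qed.

Lemma prev_node_neq a : 1 < N -> a < N -> prev_node a != a.
Proof.
move=> N_gt1 aN; rewrite -{2}(pv_index aN) prev_nodeE.
by rewrite -[in X in _ != X](addn0 (index a p)) pv_offset_eq //; lia.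
Qed.

Lemma next_prev_node_neq a : 2 < N -> a < N -> next_node a != prev_node a.
Proof. by move=> N_gt2 aN; rewrite prev_nodeE /next_node -addn1 pv_offset_eq //; lia. Qed.

Lemma zhalf_pstep n : zhalf p (pstep p n) = reduced_step N (pv p n) (pv p n.+1).
Proof.
rewrite /zhalf /pstep /pdiff /reduced_step cw_distE ?pv_lt //.
move: (pv_lt n) (pv_lt n.+1); move: (pv p n) (pv p n.+1) => x y xN yN.
by repeat case: ifP; lia.
Qed.

Lemma zhalf_opp_pstep n : zhalf p (- pstep p n) = reduced_step N (pv p n.+1) (pv p n).
Proof.
rewrite /zhalf /pstep /pdiff /reduced_step cw_distE ?pv_lt //.
move: (pv_lt n) (pv_lt n.+1); move: (pv p n) (pv p n.+1) => x y xN yN.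
by repeat case: ifP; lia.
Qed.

Lemma edge_colE a : a < N ->
  edge_col p a = (Order.min (reduced_step N a (next_node a)) (reduced_step N a (prev_node a)),
                  Order.max (reduced_step N a (next_node a)) (reduced_step N a (prev_node a))).
Proof.
by move=> aN; rewrite /edge_col zhalf_pstep zhalf_opp_pstep pv_succ_prev_index // pv_index.
Qed.

Lemma chordE a b : a < N -> chord p a b = (b == next_node a) || (b == prev_node a).
Proof.
move=> aN; apply/hasP/idP => [[n _ /orP[]] /andP[/eqP pn /eqP pn1]|].
- by rewrite -pn1 /next_node (@pv_succ_eq n (index a p)) ?pv_index ?eqxx.
- rewrite -pn /prev_node (@pv_pred_eq n (index a p + N - 1)) ?eqxx ?orbT //.
  by rewrite pn1 pv_succ_prev_index.
case/orP=> /eqP->.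
  by exists (index a p); rewrite ?mem_iota ?index_mem ?mem_path // pv_index ?eqxx.
exists ((index a p + N - 1) %% N); first by rewrite mem_iota ltn_pmod.
rewrite pv_modn (@pv_succ_eq _ (index a p + N - 1)) ?pv_modn //.
by rewrite pv_succ_prev_index ?eqxx ?orbT.
Qed.

Lemma edge_col_shiftP a k : 1 < N -> a < N ->
  edge_col p ((a + k) %% N) = edge_col p a <->
  upair_eq (next_node ((a + k) %% N)) (prev_node ((a + k) %% N))
           ((next_node a + k) %% N) ((prev_node a + k) %% N).
Proof.
move=> N_gt1 aN; set m := (a + k) %% N.
have mN : m < N by rewrite ltn_pmod.
rewrite !edge_colE // minmax_eqP.
rewrite -(reduced_step_shift k aN (next_node_lt a)).
rewrite -(reduced_step_shift k aN (prev_node_lt a)) -/m.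
apply: (@upair_eq_inj _ _ [pred x | (x < N) && (x != m)]).
- by move=> x y /andP[xN xm] /andP[yN ym]; apply: reduced_step_inj.
- by rewrite inE next_node_lt next_node_neq.
- by rewrite inE prev_node_lt prev_node_neq.
- by rewrite inE ltn_pmod // eqn_modDr_lt ?next_node_lt ?next_node_neq.
- by rewrite inE ltn_pmod // eqn_modDr_lt ?prev_node_lt ?prev_node_neq.
Qed.

Lemma rot_symP k : 2 < N -> k < N ->
  rot_sym p k <->
  forall a, a < N ->
    upair_eq (next_node ((a + k) %% N)) (prev_node ((a + k) %% N))
             ((next_node a + k) %% N) ((prev_node a + k) %% N).
Proof.
move=> N_gt2 kN; split=> [/forallP rot a aN | shiftE].
  set m := (a + k) %% N; have mN : m < N by rewrite ltn_pmod.
  have partner u : u < N -> chord p m u ->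
      u = (next_node a + k) %% N \/ u = (prev_node a + k) %% N.
    move=> uN; set b := (u + (N - k)) %% N.
    have bN : b < N by rewrite ltn_pmod.
    have bk : (b + k) %% N = u.
      by rewrite modnDml -addnA subnK ?(ltnW kN) // modnDr modn_small.
    have /forallP/(_ (Ordinal bN))/eqP /= := rot (Ordinal aN).
    by rewrite -/m bk => <-; rewrite chordE // -bk => /orP[]/eqP->; [left|right].
  apply: upair_eq_of_mem; first exact/eqP/next_prev_node_neq.
    by apply: partner; rewrite ?next_node_lt ?chordE ?eqxx.
  by apply: partner; rewrite ?prev_node_lt ?chordE ?eqxx ?orbT.
apply/forallP => a; apply/forallP => b; apply/eqP.
rewrite !chordE ?ltn_pmod //.
have [[-> ->]|[-> ->]] := shiftE a (ltn_ord a);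
  by rewrite !eqn_modDr_lt ?next_node_lt ?prev_node_lt // orbC.
Qed.

Lemma rot_sym_edge_shift_inv k : 2 < N -> k < N -> rot_sym p k = edge_shift_inv p k.
Proof.
move=> N_gt2 kN; have N_gt1 : 1 < N by lia.
apply/idP/forallP => [/(rot_symP N_gt2 kN) shiftE a | colE].
  by apply/eqP/edge_col_shiftP => //; apply: shiftE.
by apply/(rot_symP N_gt2 kN) => a aN; apply/edge_col_shiftP/eqP/(colE (Ordinal aN)).
Qed.

End PathNodes.

Theorem mainTheorem6 (N : nat) (p : seq nat) (K : nat) :
  (2 <= N)%N -> is_path N p -> star_path p ->
  (0 < K)%N -> edge_shift_inv p K ->
  (forall K' : nat, (0 < K')%N -> (K' < K)%N -> ~~ edge_shift_inv p K') ->
  ((O_rot p)%:R = (N%:R / K%:R) :> rat)%R.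
Proof.
move=> N_ge2 path_p star K_gt0 shift_K K_min.
have size_p : size p = N by rewrite (perm_size path_p) size_iota.
subst N; have N_gt0 : 0 < size p by lia.
have N_gt2 := star_size_gt2 path_p N_gt0 N_ge2 star.
have shiftP k := cyclic_periodP (edge_col p) k N_gt0.
have periodE : forall k, is_period (fun n => edge_col p (n %% size p)) k <-> K %| k.
  apply: min_period_dvdP => // [|K' /andP[K'_gt0 K'_lt_K]]; first exact/shiftP.
  by move/shiftP; apply/negP/K_min.
have shift_dvdn k : edge_shift_inv p k = (K %| k) by apply/shiftP/idP => /periodE.
have K_dvd_N : K %| size p by rewrite -shift_dvdn; apply/shiftP => n; rewrite modnDr.
rewrite -natf_div //; congr (_ %:R)%R.
rewrite /O_rot -card_ord_dvdn //; apply: eq_card => k.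
by rewrite !inE rot_sym_edge_shift_inv // shift_dvdn.
Qed.
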